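(* $A_4(\frac15,\frac15,\frac15,\frac15,\frac15)$ has a unique rational solution of Type C, namely $(f_0,f_1,f_2,f_3,f_4)=(\frac t5,\frac t5,\frac t5,\frac t5,\frac t5)$.
   Context: The $A_4^{(1)}$ Painlevé equation $A_4(\alpha_0,\dots,\alpha_4)$ is the system for five functions $f_0,\dots,f_4$ of $t$ (indices in $\mathbb{Z}/5\mathbb{Z}$, ${}'=d/dt$): $f_j'=f_j(f_{j+1}-f_{j+2}+f_{j+3}-f_{j+4})+\alpha_j$ ($j=0,\dots,4$), $f_0+\dots+f_4=t$. A rational solution is a tuple of rational functions satisfying it. It is of Type C if all of $f_0,\dots,f_4$ have a pole at $t=\infty$. *)

(* Rational functions in t over a field C are elements of the
   fraction field {fraction {poly C}}; t is the polynomial variable 'X. *)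
From HB Require Import structures.
From mathcomp Require Import all_boot all_order all_algebra.
From mathcomp Require Import generic_quotient fraction.
Set Implicit Arguments. Unset Strict Implicit. Unset Printing Implicit Defensive.
Import Order.TTheory GRing.Theory Num.Theory.
Local Open Scope ring_scope.
Local Open Scope quotient_scope.

Notation "x %:F" := (@FracField.tofrac _ x) : ring_scope.

Section RatFun.
Variable C : fieldType.
Local Notation ratfun := {fraction {poly C}}.

Definition rnum (f : ratfun) : {poly C} := \n_(repr f).
Definition rden (f : ratfun) : {poly C} := \d_(repr f).

(* d/dt of a rational function: (n/d)' = (n' d - n d') / d^2
   (independent of the chosen representative) *)
Definition rderiv (f : ratfun) : ratfun :=
  ((rnum f)^`() * rden f - rnum f * (rden f)^`())%:F / (rden f * rden f)%:F.

Definition tvar : ratfun := ('X)%:F.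

Definition pole_at_infty (f : ratfun) : bool := (size (rden f) < size (rnum f))%N.

Definition sh5 (j : 'I_5) (k : nat) : 'I_5 := inord ((j + k) %% 5).

Definition A4_solution (alpha : 'I_5 -> C) (f : 'I_5 -> ratfun) : Prop :=
  (forall j : 'I_5,
     rderiv (f j) = f j * (f (sh5 j 1) - f (sh5 j 2) + f (sh5 j 3) - f (sh5 j 4))
                    + (alpha j)%:P%:F)
  /\ \sum_(j < 5) f j = tvar.

Definition typeC (f : 'I_5 -> ratfun) : Prop := forall j, pole_at_infty (f j).
End RatFun.

(* Write f_j = t/5 + h_j and measure rational functions by their degree at
   infinity.  The coefficients g_j = f_{j+1} - f_{j+2} + f_{j+3} - f_{j+4} (in
   which t/5 cancels) satisfy g_j + g_{j+1} = h_{j+1} - h_j; together with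
   sum_j h_j = 0 this bounds the degree of every h_j by that of the g_j.  A pole
   of f_j in f_j' = f_j g_j + 1/5 forces deg g_j <= -1.  Then h_j' = (t/5 + h_j) g_j
   shows that bounds -k (k >= 1) on all h_j and g_j improve to -k-1 for the g_j,
   hence for the h_j.  So every h_j has arbitrarily negative degree: h_j = 0. *)
From HB Require Import structures.
From mathcomp Require Import all_boot all_order all_algebra.
From mathcomp Require Import generic_quotient fraction.
From mathcomp Require Import ring zify.
Set Implicit Arguments.
Unset Strict Implicit.
Unset Printing Implicit Defensive.
Import Order.TTheory GRing.Theory Num.Theory.
Local Open Scope ring_scope.

Lemma sh5_add (j : 'I_5) (a b : nat) : sh5 (sh5 j a) b = sh5 j (a + b).
Proof. by apply: val_inj; rewrite /sh5 /= !inordK ?ltn_pmod // modnDml addnA. Qed.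

Lemma sh5_0 (j : 'I_5) : sh5 j 0 = j.
Proof. by apply: val_inj; rewrite /sh5 /= addn0 modn_small // inordK. Qed.

Lemma sh5_5 (j : 'I_5) : sh5 j 5 = j.
Proof. by apply: val_inj; rewrite /sh5 /= modnDr modn_small // inordK. Qed.

Lemma sh5S (j : 'I_5) (k : nat) : sh5 j k.+1 = sh5 (sh5 j k) 1.
Proof. by rewrite sh5_add addn1. Qed.

Lemma sh5_onto (j i : 'I_5) : exists k, i = sh5 j k.
Proof.
exists (i + (5 - j))%N; apply: val_inj.
rewrite /sh5 /= inordK ?ltn_pmod // addnCA subnKC; last exact: ltnW.
by rewrite modnDr modn_small.
Qed.

Definition alt5 {V : zmodType} (h : 'I_5 -> V) (j : 'I_5) : V :=
  h (sh5 j 1) - h (sh5 j 2) + h (sh5 j 3) - h (sh5 j 4).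

Lemma alt5_addS (V : zmodType) (h : 'I_5 -> V) (j : 'I_5) :
  alt5 h j + alt5 h (sh5 j 1) = h (sh5 j 1) - h j.
Proof.
rewrite /alt5 !sh5_add !addSn !add0n sh5_5.
set b := h (sh5 j 2); set c := h (sh5 j 3); set d := h (sh5 j 4).
by rewrite -!addrA (addrCA (- d) b) (addrCA c b) addKr (addrCA (- d)) addNKr addKr.
Qed.

Section RatfunDegree.
Variable C : fieldType.
Local Notation RF := {fraction {poly C}}.

Lemma rden_neq0 (f : RF) : rden f != 0.
Proof. exact: denom_ratioP. Qed.

Lemma ratfunE (f : RF) : f = (rnum f)%:F / (rden f)%:F.
Proof.
have dF : (rden f)%:F != 0 :> RF by rewrite tofrac_eq0 rden_neq0.
apply: (mulIf dF); rewrite mulfVK // -[X in X * _]reprK /rnum /rden.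
move: (repr f) => x; unlock tofrac; rewrite -[LHS]FracField.pi_mul.
apply/eqmodP; rewrite /= FracField.equivfE /FracField.mulf /=.
by rewrite !numden_Ratio ?mulf_neq0 ?oner_neq0 ?denom_ratioP // !mulr1 mulrC.
Qed.

Lemma ratfunP (P : RF -> Prop) :
  (forall n d, d != 0 -> P (n%:F / d%:F)) -> forall f, P f.
Proof. by move=> Pfrac f; rewrite [f]ratfunE; apply/Pfrac/rden_neq0. Qed.

Lemma eq_frac (n1 d1 n2 d2 : {poly C}) : d1 != 0 -> d2 != 0 ->
  (n1%:F / d1%:F == n2%:F / d2%:F :> RF) = (n1 * d2 == n2 * d1).
Proof. by move=> d1N0 d2N0; rewrite eqr_div ?tofrac_eq0 // -!tofracM tofrac_eq. Qed.

Lemma frac_eq0 (n d : {poly C}) : d != 0 -> (n%:F / d%:F == 0 :> RF) = (n == 0).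
Proof. by move=> dN0; rewrite mulf_eq0 invr_eq0 !tofrac_eq0 (negbTE dN0) orbF. Qed.

Lemma rderiv_frac (n d : {poly C}) : d != 0 ->
  rderiv (n%:F / d%:F) = (n^`() * d - n * d^`())%:F / (d * d)%:F.
Proof.
move=> dN0; rewrite /rderiv; set n1 := rnum _; set d1 := rden _.
have E : n1 * d = n * d1.
  by apply/eqP; rewrite -eq_frac ?rden_neq0 // -ratfunE.
have E' : n1^`() * d + n1 * d^`() = n^`() * d1 + n * d1^`() by rewrite -!derivM E.
apply/eqP; rewrite eq_frac ?mulf_neq0 ?rden_neq0 // -subr_eq0.
(* the difference is a combination of the two relations E and E' *)
have -> : (n1^`() * d1 - n1 * d1^`()) * (d * d) - (n^`() * d - n * d^`()) * (d1 * d1)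
   = d * d1 * ((n1^`() * d + n1 * d^`()) - (n^`() * d1 + n * d1^`()))
     - (d1^`() * d + d1 * d^`()) * (n1 * d - n * d1) by ring.
by rewrite E E' !subrr !mulr0 subrr.
Qed.

Lemma rderivD (f g : RF) : rderiv (f + g) = rderiv f + rderiv g.
Proof.
elim/ratfunP: f => n1 d1 d1N0; elim/ratfunP: g => n2 d2 d2N0.
rewrite addf_div ?tofrac_eq0 // -!tofracM -tofracD.
rewrite !rderiv_frac ?mulf_neq0 // addf_div ?tofrac_eq0 ?mulf_neq0 //.
rewrite -!tofracM -tofracD; apply/eqP; rewrite eq_frac ?mulf_neq0 //.
by rewrite !derivE; apply/eqP; ring.
Qed.

Lemma rderiv_tofrac (p : {poly C}) : rderiv p%:F = (p^`())%:F.
Proof.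
rewrite -[p%:F]divr1 -tofrac1 rderiv_frac ?oner_neq0 //.
by rewrite derivC mulr0 subr0 !mulr1 tofrac1 divr1.
Qed.

Definition rdeg (f : RF) : int := (size (rnum f))%:Z - (size (rden f))%:Z.

Definition rdeg_le (f : RF) (e : int) : bool := (f == 0) || (rdeg f <= e).

Lemma rdeg_frac (n d : {poly C}) : n != 0 -> d != 0 ->
  rdeg (n%:F / d%:F) = (size n)%:Z - (size d)%:Z.
Proof.
move=> nN0 dN0; rewrite /rdeg; set n1 := rnum _; set d1 := rden _.
have E : n1 * d = n * d1.
  by apply/eqP; rewrite -eq_frac ?rden_neq0 // -ratfunE.
have n1N0 : n1 != 0.
  apply: contra_neq (mulf_neq0 nN0 (rden_neq0 (n%:F / d%:F))) => n10.
  by rewrite -E n10 mul0r.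
have := congr1 (fun p : {poly C} => size p) E; rewrite /= !size_mul ?rden_neq0 //.
have := size_poly_gt0 n1; have := size_poly_gt0 d; have := size_poly_gt0 n.
have := size_poly_gt0 d1; rewrite rden_neq0 n1N0 nN0 dN0.
move: (size n1) (size d1) (size n) (size d) => a b c e; lia.
Qed.

Lemma rdeg_le_frac (n d : {poly C}) (e : int) : d != 0 ->
  rdeg_le (n%:F / d%:F) e = (n == 0) || ((size n)%:Z - (size d)%:Z <= e).
Proof.
by move=> dN0; rewrite /rdeg_le frac_eq0 //; have [//|nN0] := eqVneq n 0; rewrite rdeg_frac.
Qed.

Lemma rdeg_le_refl (f : RF) : rdeg_le f (rdeg f).
Proof. by rewrite /rdeg_le lexx orbT. Qed.

Lemma rdeg_le0 (e : int) : rdeg_le 0 e.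
Proof. by rewrite /rdeg_le eqxx. Qed.

Lemma rdeg_leW (f : RF) (a b : int) : rdeg_le f a -> a <= b -> rdeg_le f b.
Proof.
by case/orP=> [/eqP->|fa ab]; [rewrite rdeg_le0 | rewrite /rdeg_le (le_trans fa ab) orbT].
Qed.

Lemma rdeg_leN (f : RF) (e : int) : rdeg_le f e -> rdeg_le (- f) e.
Proof.
by elim/ratfunP: f => n d dN0; rewrite -mulNr -tofracN !rdeg_le_frac // oppr_eq0 size_polyN.
Qed.

Lemma rdeg_leD (f g : RF) (e : int) : rdeg_le f e -> rdeg_le g e -> rdeg_le (f + g) e.
Proof.
have [-> _|fN0] := eqVneq f 0; first by rewrite add0r.
have [-> |gN0] := eqVneq g 0; first by rewrite addr0.
move: fN0 gN0; elim/ratfunP: f => n1 d1 d1N0; elim/ratfunP: g => n2 d2 d2N0.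
rewrite !frac_eq0 // => n1N0 n2N0.
rewrite addf_div ?tofrac_eq0 // -!tofracM -tofracD !rdeg_le_frac ?mulf_neq0 //.
rewrite (negbTE n1N0) (negbTE n2N0) /= => b1 b2; apply/orP; right.
have := size_polyD (n1 * d2) (n2 * d1); rewrite !size_mul //.
move: b1 b2 (size_poly_gt0 n1) (size_poly_gt0 n2) (size_poly_gt0 d1) (size_poly_gt0 d2).
rewrite n1N0 n2N0 d1N0 d2N0.
move: (size (n1 * d2 + n2 * d1)) (size n1) (size n2) (size d1) (size d2) => s a b c e'; lia.
Qed.

Lemma rdeg_leB (f g : RF) (e : int) : rdeg_le f e -> rdeg_le g e -> rdeg_le (f - g) e.
Proof. by move=> fe ge; apply/rdeg_leD/rdeg_leN. Qed.

Lemma rdegM (f g : RF) : f != 0 -> g != 0 -> rdeg (f * g) = rdeg f + rdeg g.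
Proof.
elim/ratfunP: f => n1 d1 d1N0; elim/ratfunP: g => n2 d2 d2N0.
rewrite !frac_eq0 // => n1N0 n2N0.
rewrite mulf_div -!tofracM !rdeg_frac ?mulf_neq0 // !size_mul //.
move: (size_poly_gt0 n1) (size_poly_gt0 n2) (size_poly_gt0 d1) (size_poly_gt0 d2).
rewrite n1N0 n2N0 d1N0 d2N0.
move: (size n1) (size n2) (size d1) (size d2) => a b c e; lia.
Qed.

Lemma rdeg_leM (f g : RF) (a b : int) :
  rdeg_le f a -> rdeg_le g b -> rdeg_le (f * g) (a + b).
Proof.
have [->|fN0] := eqVneq f 0; first by rewrite mul0r !rdeg_le0.
have [->|gN0] := eqVneq g 0; first by rewrite mulr0 !rdeg_le0.
by rewrite /rdeg_le mulf_eq0 (negbTE fN0) (negbTE gN0) rdegM //= => fa gb; apply: lerD.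
Qed.

Lemma rdeg_le_mulKl (x g : RF) (e : int) :
  x != 0 -> rdeg_le (x * g) (rdeg x + e) -> rdeg_le g e.
Proof.
move=> xN0; have [->|gN0] := eqVneq g 0; first by rewrite rdeg_le0.
by rewrite /rdeg_le mulf_eq0 (negbTE xN0) (negbTE gN0) rdegM // lerD2l.
Qed.

Lemma rdeg_tofrac (p : {poly C}) : p != 0 -> rdeg p%:F = (size p)%:Z - 1.
Proof. by move=> pN0; rewrite -[p%:F]divr1 -tofrac1 rdeg_frac ?oner_neq0 // size_poly1. Qed.

Lemma rdeg_le_polyC (a : C) : rdeg_le (a%:P)%:F 0.
Proof.
have [->|aN0] := eqVneq a 0; first by rewrite tofrac0 rdeg_le0.
by rewrite /rdeg_le rdeg_tofrac ?polyC_eq0 // size_polyC aN0 subrr lexx orbT.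
Qed.

Lemma rdeg_le_Mn (f : RF) (n : nat) (e : int) :
  (n%:R : C) != 0 -> rdeg_le (f *+ n) e -> rdeg_le f e.
Proof.
move=> nN0; have nF : (n%:R : RF) = ((n%:R : C)%:P)%:F by rewrite !rmorph_nat.
have nFN0 : ((n%:R : C)%:P)%:F != 0 :> RF by rewrite tofrac_eq0 polyC_eq0.
rewrite -mulr_natl nF => fne; apply: (rdeg_le_mulKl nFN0).
by rewrite rdeg_tofrac ?polyC_eq0 // size_polyC nN0 subrr add0r.
Qed.

Lemma rdeg_le_deriv (f : RF) (e : int) : rdeg_le f e -> rdeg_le (rderiv f) (e - 1).
Proof.
elim/ratfunP: f => n d dN0; rewrite rderiv_frac // !rdeg_le_frac ?mulf_neq0 //.
have [->|nN0] := eqVneq n 0; first by rewrite deriv0 !mul0r subr0 eqxx.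
rewrite /= (size_mul dN0 dN0) => ne; apply/orP; right.
have := size_polyD (n^`() * d) (- (n * d^`())); rewrite size_polyN.
move: ne (size_polyMleq n^`() d) (size_polyMleq n d^`()).
move: (lt_size_deriv nN0) (lt_size_deriv dN0) (size_poly_gt0 n) (size_poly_gt0 d).
rewrite nN0 dN0.
move: (size (n^`() * d - n * d^`())) (size (n^`() * d)) (size (n * d^`())).
move: (size n^`()) (size d^`()) (size n) (size d) => s a b c e' x y; lia.
Qed.

Lemma rdeg_le_eq0 (f : RF) : (forall m : nat, rdeg_le f (- m%:Z)) -> f = 0.
Proof.
move=> fm; apply/eqP; move: (fm (size (rden f)).+1); rewrite /rdeg_le /rdeg.
by case: (f == 0) => //=; move: (size _) (size _) => a b; lia.
Qed.

Lemma pole_at_inftyE (f : RF) : pole_at_infty f = (0 < rdeg f).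
Proof. by rewrite /pole_at_infty /rdeg subr_gt0 ltz_nat. Qed.

Lemma rdeg_gt0_neq0 (f : RF) : 0 < rdeg f -> f != 0.
Proof.
rewrite [f in f != 0]ratfunE frac_eq0 ?rden_neq0 // -size_poly_gt0 /rdeg.
by move: (size _) (size _) => a b; lia.
Qed.

Lemma rdeg_le_coef_of_pole (x g : RF) (a : C) :
  0 < rdeg x -> rderiv x = x * g + (a%:P)%:F -> rdeg_le g (-1).
Proof.
move=> xpos xE; apply: (rdeg_le_mulKl (rdeg_gt0_neq0 xpos)).
have -> : x * g = rderiv x - (a%:P)%:F by rewrite xE addrK.
apply: rdeg_leB; first exact/rdeg_le_deriv/rdeg_le_refl.
by apply: rdeg_leW (rdeg_le_polyC a) _; lia.
Qed.

Lemma rdeg_le_coef_step (u h g : RF) (k : int) : rdeg u = 1 -> 1 <= k ->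
  rderiv h = (u + h) * g -> rdeg_le h (- k) -> rdeg_le g (- k) -> rdeg_le g (- k - 1).
Proof.
move=> u1 k1 hE hk gk.
have uN0 : u != 0 by apply: rdeg_gt0_neq0; rewrite u1.
have ug : rdeg_le (u * g) (rdeg u + (- k - 2)).
  have -> : u * g = rderiv h - h * g by rewrite hE mulrDl addrK.
  rewrite u1; apply: rdeg_leB.
    by apply: rdeg_leW (rdeg_le_deriv hk) _; lia.
  by apply: rdeg_leW (rdeg_leM hk gk) _; lia.
by apply: rdeg_leW (rdeg_le_mulKl uN0 ug) _; lia.
Qed.
End RatfunDegree.

Section A4Uniqueness.
Variable C : fieldType.
Hypothesis five_neq0 : (5%:R : C) != 0.
Local Notation RF := {fraction {poly C}}.
Local Notation u := (((5%:R : C)^-1 *: 'X)%:F : RF).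

Lemma rderiv_u : rderiv u = (((5%:R : C)^-1)%:P)%:F.
Proof. by rewrite rderiv_tofrac derivZ derivX alg_polyC. Qed.

Lemma rdeg_u : rdeg u = 1.
Proof.
have XN0 : (5%:R : C)^-1 *: 'X != 0.
  by rewrite scaler_eq0 invr_eq0 negb_or five_neq0 polyX_eq0.
by rewrite rdeg_tofrac // size_scale ?invr_eq0 // size_polyX.
Qed.

Lemma u_mul5 : u *+ 5 = tvar C.
Proof. by rewrite -tofracMn scalerMnl -mulr_natr mulVf // scale1r. Qed.

Lemma tvar_div5 : tvar C / 5%:R = u.
Proof.
have fiveN0 : (5%:R : RF) != 0.
  by rewrite -!(rmorph_nat (@tofrac _)) tofrac_eq0 -polyC_natr polyC_eq0.
by rewrite -u_mul5 -(mulr_natr u) mulfK.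
Qed.

Lemma rdeg_le_alt5 (h : 'I_5 -> RF) (e : int) (j : 'I_5) :
  (forall i, rdeg_le (h i) e) -> rdeg_le (alt5 h j) e.
Proof. by move=> he; apply: rdeg_leB; [apply: rdeg_leD; [apply: rdeg_leB|]|]. Qed.

Lemma rdeg_le_of_alt5 (h : 'I_5 -> RF) (e : int) : \sum_(i < 5) h i = 0 ->
  (forall j, rdeg_le (alt5 h j) e) -> forall j, rdeg_le (h j) e.
Proof.
move=> h_sum alt_e j.
have succ_e i : rdeg_le (h (sh5 i 1) - h i) e by rewrite -alt5_addS; apply: rdeg_leD.
have diff_e i : rdeg_le (h i - h j) e.
  have [k ->] := sh5_onto j i; elim: k => [|k IHk]; first by rewrite sh5_0 subrr rdeg_le0.
  by rewrite sh5S -(subrKA (h (sh5 j k))); apply: rdeg_leD.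
apply: (rdeg_le_Mn five_neq0).
have -> : h j *+ 5 = - \sum_(i < 5) (h i - h j).
  by rewrite sumrB h_sum sumr_const card_ord sub0r opprK.
apply/rdeg_leN/(big_ind (fun g => rdeg_le g e)) => [|g1 g2|i _].
- exact: rdeg_le0.
- exact: rdeg_leD.
- exact: diff_e.
Qed.

Lemma A4_typeC_eq (f : 'I_5 -> RF) :
  (forall j, rderiv (f j) = f j * alt5 f j + (((5%:R : C)^-1)%:P)%:F) ->
  \sum_(j < 5) f j = tvar C -> typeC f -> forall j, f j = u.
Proof.
move=> fE f_sum f_pole; pose h j := f j - u.
have f_uh j : f j = u + h j by rewrite subrKC.
have alt5_h j : alt5 f j = alt5 h j by rewrite /alt5 /h; ring.
have h_sum : \sum_(j < 5) h j = 0 by rewrite sumrB f_sum sumr_const card_ord u_mul5 subrr.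
have hE j : rderiv (h j) = (u + h j) * alt5 h j.
  by move: (fE j); rewrite alt5_h f_uh rderivD rderiv_u addrC => /addIr.
have h_bound (m : nat) j : rdeg_le (h j) (- (m.+1)%:Z).
  elim: m j => [|m IHm]; apply: rdeg_le_of_alt5 h_sum _ => j.
    by rewrite -alt5_h; apply: rdeg_le_coef_of_pole (fE j); rewrite -pole_at_inftyE.
  have -> : - (m.+2)%:Z = - (m.+1)%:Z - 1 by lia.
  by apply: rdeg_le_coef_step rdeg_u _ (hE j) (IHm j) (rdeg_le_alt5 _ IHm); lia.
move=> j; have h0 : h j = 0.
  by apply: rdeg_le_eq0 => m; apply: rdeg_leW (h_bound m j) _; lia.
by rewrite f_uh h0 addr0.
Qed.
End A4Uniqueness.

Theorem lemma3p7 (C : numClosedFieldType) (f : 'I_5 -> {fraction {poly C}}) :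
  (A4_solution (fun _ => 5%:R^-1) f /\ typeC f) <->
  (forall j : 'I_5, f j = tvar C / 5%:R).
Proof.
have five_neq0 : (5%:R : C) != 0 by rewrite pnatr_eq0.
rewrite (tvar_div5 five_neq0).
split=> [[[fE f_sum] f_pole]|fu]; first exact: A4_typeC_eq.
split; last by move=> j; rewrite pole_at_inftyE fu rdeg_u.
split=> [j|]; first by rewrite !fu rderiv_u subrr add0r subrr mulr0 add0r.
by rewrite (eq_bigr _ (fun j _ => fu j)) sumr_const card_ord u_mul5.
Qed.
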